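(* Let $N\in\mathbb{N}$ be odd and either prime or divisible by at least two distinct primes. Let $b\in\mathbb{Z}$ and $f\in\mathbb{Z}[X]$ with $f(b)=N$, let $d:=\deg f$, and suppose $d$ is smaller than $q:=\max\{q'\text{ prime}:q'\mid N\}$ and $\gcd(\mathrm{lc}(f),N)=1$, where $\mathrm{lc}(f)$ is the leading coefficient of $f$. Then \[N\text{ is prime}\iff \forall x\in\{0,\dots,N-1\}:\ f(x)^{N-1}\bmod N\in\{0,1\}.\] *)

From mathcomp Require Import all_boot all_order all_algebra.
Set Implicit Arguments. Unset Strict Implicit. Unset Printing Implicit Defensive.
Import Order.TTheory GRing.Theory Num.Theory.

Definition two_distinct_prime_divisors (N : nat) : Prop :=
  exists p1 p2 : nat, [/\ prime p1, prime p2, p1 != p2, (p1 %| N)%N & (p2 %| N)%N].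

(** If [N] is prime, the criterion is Fermat's little theorem applied to
    [f(x)].  Otherwise [N] has, besides its largest prime factor [q], a second
    prime factor [p].  Modulo [q] the polynomial [f] keeps its degree [d < q],
    so it has a non-root [a] in [F_q]; by the Chinese remainder theorem some
    [x < N] satisfies [x = b (mod p)] and [x = a (mod q)].  Then [p] divides
    [f(x)] (as [f(b) = N]) but [q] does not, so [f(x)^(N-1) mod N] is nonzero
    modulo [q] and vanishes modulo [p]: it is neither [0] nor [1]. *)

From mathcomp Require Import all_boot all_order all_algebra all_field.
Import Order.TTheory GRing.Theory Num.Theory.
Local Open Scope ring_scope.

Lemma Fp_intr_eq0 (p : nat) (z : int) :
  prime p -> ((z%:~R : 'F_p) == 0) = (p %| z)%Z.
Proof. by move=> p_pr; rewrite (dvdz_pcharf (pchar_Fp p_pr)). Qed.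

Lemma Fp_intr_eq (p : nat) (m n : int) :
  prime p -> ((m%:~R : 'F_p) == n%:~R) = (m == n %[mod p])%Z.
Proof. by move=> p_pr; rewrite eqz_mod_dvd -subr_eq0 -rmorphB /= Fp_intr_eq0. Qed.

Lemma Fp_intr_modz {p N : nat} (z : int) :
  prime p -> (p %| N)%N -> (((z %% N)%Z)%:~R : 'F_p) = z%:~R.
Proof.
move=> p_pr pN; rewrite [in RHS](divz_eq z N) [RHS]intrD [X in _ = X + _]intrM.
have -> : ((N%:Z)%:~R : 'F_p) = 0 by apply/eqP; rewrite Fp_intr_eq0.
by rewrite mulr0 add0r.
Qed.

Lemma fermat_modz (p : nat) (y : int) : prime p ->
  (y ^+ p.-1 %% p)%Z = 0 \/ (y ^+ p.-1 %% p)%Z = 1.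
Proof.
move=> p_pr; have p1_neq0 : p.-1 != 0%N by case: p p_pr => [|[|]].
have [y0|y_neq0] := eqVneq (y%:~R : 'F_p) 0.
  left; apply/dvdz_mod0P; rewrite -Fp_intr_eq0 // rmorphXn /= y0.
  by rewrite expr0n (negbTE p1_neq0).
right; have : ((y ^+ p.-1)%:~R : 'F_p) = (1 : int)%:~R.
  rewrite rmorphXn /=; apply: (mulfI y_neq0).
  rewrite -exprS prednK ?prime_gt0 // mulr1.
  by have := expf_card (y%:~R : 'F_p); rewrite card_Fp.
move/eqP; rewrite Fp_intr_eq // => /eqP ->.
by rewrite modz_small //= ltz_nat prime_gt1.
Qed.

Lemma exists_nonroot (F : finFieldType) (g : {poly F}) :
  g != 0 -> (size g <= #|F|)%N -> exists a, ~~ root g a.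
Proof.
move=> g_neq0 size_g; apply/existsP; rewrite -negb_forall; apply/negP.
move=> /forallP all_roots.
have := max_poly_roots g_neq0 (introT allP (fun a _ => all_roots a)) (enum_uniq F).
by rewrite -cardE ltnNge size_g.
Qed.

Lemma chinese_Fp {p q N : nat} (a : 'F_p) (c : 'F_q) :
  (0 < N)%N -> prime p -> prime q -> p != q -> (p %| N)%N -> (q %| N)%N ->
  exists2 x, (x < N)%N & (x%:R : 'F_p) = a /\ (x%:R : 'F_q) = c.
Proof.
move=> N_gt0 p_pr q_pr p_neq_q pN qN.
have cop_pq : coprime p q by rewrite prime_coprime // dvdn_prime2.
exists (chinese p q a c %% N)%N; first by rewrite ltn_pmod.
split; rewrite -Fp_nat_mod //.
- by rewrite (modn_dvdm _ pN) chinese_modl // Fp_nat_mod // natr_Zp.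
- by rewrite (modn_dvdm _ qN) chinese_modr // Fp_nat_mod // natr_Zp.
Qed.

Section CompositeWitness.

Context {N p q : nat}.
Hypotheses (p_pr : prime p) (q_pr : prime q) (pN : (p %| N)%N) (qN : (q %| N)%N).

(* Reduced modulo [q] the power is nonzero, reduced modulo [p] it is zero. *)
Lemma pow_modz_neq01 {y : int} : (1 < N)%N ->
  (p %| y)%Z -> ~~ (q %| y)%Z ->
  ~ ((y ^+ N.-1 %% N)%Z = 0 \/ (y ^+ N.-1 %% N)%Z = 1).
Proof.
move=> N_gt1 py qy; have N1_neq0 : N.-1 != 0%N by rewrite -lt0n -ltnS (ltn_predK N_gt1).
case=> r_eq.
- have := Fp_intr_modz (y ^+ N.-1) q_pr qN.
  rewrite r_eq rmorphXn /= => /esym/eqP.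
  by rewrite expf_eq0 Fp_intr_eq0 // (negbTE qy) andbF.
- have := Fp_intr_modz (y ^+ N.-1) p_pr pN.
  have /eqP y0 : (y%:~R : 'F_p) == 0 by rewrite Fp_intr_eq0.
  rewrite r_eq rmorphXn /= y0 expr0n (negbTE N1_neq0) rmorph1.
  by move/eqP; rewrite oner_eq0.
Qed.

Lemma exists_value_dvd_ndvd {b : int} {f : {poly int}} : (0 < N)%N -> p != q ->
  (p %| f.[b])%Z -> ~~ (q %| lead_coef f)%Z -> (size f <= q)%N ->
  exists2 x, (x < N)%N & (p %| f.[x%:Z])%Z /\ ~~ (q %| f.[x%:Z])%Z.
Proof.
move=> N_gt0 p_neq_q pfb q_lc size_f.
set g := map_poly (intr : int -> 'F_q) f.
have lc_neq0 : ((lead_coef f)%:~R : 'F_q) != 0 by rewrite Fp_intr_eq0.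
have size_g : size g = size f by apply: size_map_poly_id0.
have g_neq0 : g != 0 by rewrite -lead_coef_eq0 lead_coef_map_eq.
have [a g_a] : exists a, ~~ root g a by apply: exists_nonroot; rewrite // size_g card_Fp.
have [x x_lt [xp xq]] := chinese_Fp (b%:~R) a N_gt0 p_pr q_pr p_neq_q pN qN.
exists x => //; split; rewrite -Fp_intr_eq0 // -horner_map /=.
- by rewrite [_%:~R]xp horner_map /= Fp_intr_eq0.
- by rewrite [_%:~R]xq.
Qed.

End CompositeWitness.

Lemma other_prime_divisor {N : nat} (q : nat) : two_distinct_prime_divisors N ->
  exists p, [/\ prime p, (p %| N)%N & p != q].
Proof.
case=> [p1 [p2 [p1_pr p2_pr p12 p1N p2N]]].
have [<-|] := eqVneq p1 q; last by exists p1.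
by exists p2; rewrite eq_sym.
Qed.

Lemma prime_ndvdz_gcdz1 {a : int} {N q : nat} :
  prime q -> (q %| N)%N -> gcdz a N = 1%N -> ~~ (q %| a)%Z.
Proof.
move=> q_pr qN gcd1; apply/negP => qa.
have : (q %| gcdz a N)%Z by rewrite dvdz_gcd qa.
by rewrite gcd1 dvdz1 /= => /eqP q1; move: (prime_gt1 q_pr); rewrite q1.
Qed.

Theorem theorem5p1 (N : nat) (b : int) (f : {poly int}) :
  odd N ->
  prime N \/ two_distinct_prime_divisors N ->
  f.[b] = N%:Z ->
  ((size f).-1 < max_pdiv N)%N ->
  gcdz (lead_coef f) N%:Z = 1%N ->
  (prime N <->
   (forall x : nat, (x < N)%N ->
      let r := ((f.[x%:Z] ^+ N.-1) %% N%:Z)%Z in r = 0 \/ r = 1)).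
Proof.
move=> oddN N_prime_or_composite fb deg_f lc_coprime.
split=> [N_pr x _|criterion]; first exact: fermat_modz.
case: N_prime_or_composite => [//|two_primes].
have N_gt0 : (0 < N)%N by case: N oddN {two_primes fb deg_f lc_coprime criterion}.
set q := max_pdiv N.
have [p [p_pr pN p_neq_q]] := other_prime_divisor q two_primes.
have N_gt1 : (1 < N)%N by apply: leq_trans (prime_gt1 p_pr) (dvdn_leq N_gt0 pN).
have q_pr : prime q := max_pdiv_prime N_gt1.
have qN : (q %| N)%N := max_pdiv_dvd N.
have pfb : (p %| f.[b])%Z by rewrite fb.
have size_f : (size f <= q)%N by move: deg_f; case: (size f).
have [x x_lt [px qx]] := exists_value_dvd_ndvd p_pr q_pr pN qN N_gt0 p_neq_q
  pfb (prime_ndvdz_gcdz1 q_pr qN lc_coprime) size_f.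
by case: (pow_modz_neq01 p_pr q_pr pN qN N_gt1 px qx (criterion x x_lt)).
Qed.
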